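(* Let $X$ be a collectionwise normal space with $\operatorname{ind} X=0$, and let $A$ be a discrete subset of $X$. Then there exists a pairwise disjoint family $\{V_a : a\in A\}$ of clopen subsets of $X$ such that $a\in V_a$ for each $a\in A$ and the set $X\setminus\bigcup_{a\in A}V_a$ is clopen.
   Context: A space $X$ is collectionwise normal if it is $T_1$ and for every discrete family $\{F_s\}_{s\in S}$ of closed subsets of $X$ there is a discrete family $\{V_s\}_{s\in S}$ of open sets with $F_s\subseteq V_s$ for all $s$. A family of subsets is discrete if each point has a neighbourhood meeting at most one member; a subset $D$ is discrete if the family of its singletons is discrete. $\operatorname{ind}$ denotes the small inductive dimension. *)

From HB Require Import structures.
From mathcomp Require Import all_boot all_order all_algebra.
From mathcomp Require Import all_classical all_reals all_analysis.
Set Implicit Arguments. Unset Strict Implicit. Unset Printing Implicit Defensive.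
Local Open Scope classical_set_scope.

Definition discrete_family {T : topologicalType} {S : Type} (F : S -> set T) :=
  forall x : T, exists U : set T, nbhs x U /\
    forall s t : S, F s `&` U !=set0 -> F t `&` U !=set0 -> s = t.

Definition discrete_subset {T : topologicalType} (D : set T) :=
  discrete_family (fun d : {x : T | D x} => [set proj1_sig d]).

Definition collectionwise_normal (T : topologicalType) :=
  @accessible_space T /\
  forall (S : Type) (F : S -> set T),
    (forall s, closed (F s)) -> discrete_family F ->
    exists V : S -> set T,
      (forall s, open (V s)) /\ discrete_family V /\ (forall s, F s `<=` V s).

(* ind X = 0 : X is nonempty (ind of the empty space is -1) and every point has
   arbitrarily small open neighbourhoods with empty boundary, i.e. clopen ones. *)
Definition ind_zero (T : topologicalType) :=
  (exists x : T, True) /\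
  forall (x : T) (U : set T), open U -> U x ->
    exists V : set T, clopen V /\ V x /\ V `<=` U.

From HB Require Import structures.
From mathcomp Require Import all_boot all_order all_algebra.
From mathcomp Require Import all_classical all_reals all_analysis.
Set Implicit Arguments. Unset Strict Implicit.
Local Open Scope classical_set_scope.

(* Collectionwise normality separates the points of A by a discrete family of
   open sets; since ind X = 0 each of these shrinks to a clopen neighbourhood
   of its point, and the shrunken family is still discrete.  The members of a
   discrete family are pairwise disjoint, and the union of a discrete family of
   closed sets is closed, so the union of the clopen family is clopen. *)

Section DiscreteFamily.
Variables (X : topologicalType) (S : Type).
Implicit Types F G : S -> set X.

Lemma discrete_family_sub F G :
  (forall s, F s `<=` G s) -> discrete_family G -> discrete_family F.
Proof.
move=> FG Gd x; have [U [Ux GU]] := Gd x; exists U; split => // s t.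
by move=> [y [Fy Uy]] [z [Fz Uz]]; apply: GU; [exists y | exists z];
  split => //; apply: FG.
Qed.

Lemma discrete_family_disjoint F s t :
  discrete_family F -> s <> t -> F s `&` F t = set0.
Proof.
move=> Fd st; apply/seteqP; split => // x [Fsx Ftx].
have [U [Ux FU]] := Fd x.
have meetU P : P x -> P `&` U !=set0 by exists x; split => //; exact: nbhs_singleton.
exact/st/FU/meetU/Ftx/meetU.
Qed.

Lemma discrete_family_bigcup_closed F :
  (forall s, closed (F s)) -> discrete_family F -> closed (\bigcup_(s in setT) F s).
Proof.
move=> Fc Fd x clx; apply: contrapT => nFx.
have [U [Ux FU]] := Fd x.
have [y [[s _ Fsy] Uy]] := clx U Ux.
have nbhs_notFs : nbhs x (U `&` ~` F s).
  apply: filterI => //; apply: open_nbhs_nbhs; split; first by rewrite openC.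
  by move=> Fsx; apply: nFx; exists s.
have [z [[t _ Ftz] [Uz nFsz]]] := clx _ nbhs_notFs.
have ts : t = s by apply: FU; [exists z | exists y].
by rewrite ts in Ftz.
Qed.

Lemma discrete_family_bigcup_clopen F :
  (forall s, clopen (F s)) -> discrete_family F -> clopen (\bigcup_(s in setT) F s).
Proof.
move=> Fc Fd; split; first by apply: bigcup_open => s _; exact: (Fc s).1.
by apply: discrete_family_bigcup_closed => // s; exact: (Fc s).2.
Qed.

End DiscreteFamily.

Lemma ind_zero_clopen_shrink (X : topologicalType) (S : Type)
    (p : S -> X) (V : S -> set X) :
  ind_zero X -> (forall s, open (V s)) -> (forall s, V s (p s)) ->
  exists W : S -> set X,
    [/\ forall s, clopen (W s), forall s, W s (p s) & forall s, W s `<=` V s].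
Proof.
move=> [_ ind] Vo Vp.
have /choice[W HW] : forall s, exists W, clopen W /\ W (p s) /\ W `<=` V s.
  by move=> s; apply: ind.
by exists W; split => s; have [? [? ?]] := HW s.
Qed.

Lemma discrete_subset_open_separation (X : topologicalType) (A : set X) :
  collectionwise_normal X -> discrete_subset A ->
  exists V : {x : X | A x} -> set X,
    [/\ forall s, open (V s), discrete_family V & forall s, V s (proj1_sig s)].
Proof.
move=> [acc cwn] dA.
have [V [Vo [Vd Vsub]]] := cwn _ (fun s : {x : X | A x} => [set proj1_sig s])
  (fun s => @accessible_closed_set1 X acc (proj1_sig s)) dA.
by exists V; split => // s; apply: Vsub.
Qed.

Lemma discrete_subset_clopen_separation (X : topologicalType) (A : set X) :
  collectionwise_normal X -> ind_zero X -> discrete_subset A ->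
  exists W : {x : X | A x} -> set X,
    [/\ forall s, clopen (W s), discrete_family W & forall s, W s (proj1_sig s)].
Proof.
move=> cwnX indX dA.
have [V [Vo Vd Vp]] := discrete_subset_open_separation cwnX dA.
have [W [Wc Wp WV]] := ind_zero_clopen_shrink indX Vo Vp.
by exists W; split => //; exact: discrete_family_sub WV Vd.
Qed.

Section ExtendSig.
Variables (T U : Type) (A : set T) (W : {x : T | A x} -> set U).

(* Off A the extension is the junk value set0. *)
Definition extend_sig (x : T) : set U :=
  if pselect (A x) is left h then W (exist _ x h) else set0.

Lemma extend_sigE a (h : A a) : extend_sig a = W (exist _ a h).
Proof.
by rewrite /extend_sig; case: pselect => // h'; rewrite (Prop_irrelevance h h').
Qed.

Lemma bigcup_extend_sig :
  \bigcup_(a in A) extend_sig a = \bigcup_(s in setT) W s.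
Proof.
apply/seteqP; split => x.
  by move=> [a Aa]; rewrite (extend_sigE Aa) => ?; exists (exist _ a Aa).
by move=> [[a Aa] _ ?]; exists a => //; rewrite (extend_sigE Aa).
Qed.

End ExtendSig.

Theorem mainTheorem4 (X : topologicalType) (A : set X) :
  collectionwise_normal X -> ind_zero X -> discrete_subset A ->
  exists V : X -> set X,
    (forall a, A a -> clopen (V a) /\ V a a) /\
    (forall a b, A a -> A b -> a <> b -> V a `&` V b = set0) /\
    clopen (~` (\bigcup_(a in A) V a)).
Proof.
move=> cwnX indX dA.
have [W [Wc Wd Wp]] := discrete_subset_clopen_separation cwnX indX dA.
exists (extend_sig W); split; [|split].
- move=> a Aa; rewrite (extend_sigE W Aa).
  by split; [exact: Wc | exact: (Wp (exist _ a Aa))].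
- move=> a b Aa Ab ab; rewrite (extend_sigE W Aa) (extend_sigE W Ab).
  by apply: discrete_family_disjoint => // -[].
- have [Wo Wcl] := discrete_family_bigcup_clopen Wc Wd.
  by rewrite bigcup_extend_sig; split; [rewrite openC | rewrite closedC].
Qed.
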